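(* Let $\rho_T$ and $\rho_A$ be density matrices on $\mathbb{C}^2$ with eigenvalues, sorted in decreasing order, $\{\alpha, 1-\alpha\}$ and $\{\beta, 1-\beta\}$ respectively (so $\alpha,\beta \ge 1/2$). Let $U$ be any unitary on $\mathbb{C}^2\otimes\mathbb{C}^2$, and let $\rho_T^{out} = \mathrm{Tr}_A\!\left(U(\rho_T\otimes\rho_A)U^\dagger\right)$ have eigenvalues, sorted in decreasing order, $\{\alpha^{out}, 1-\alpha^{out}\}$. Then $$\alpha^{out} \le \max(\alpha,\beta).$$
   Context: $\mathrm{Tr}_A$ denotes the partial trace over the second (auxiliary) tensor factor; the first factor is the target qubit. *)

From HB Require Import structures.
From mathcomp Require Import all_boot all_order all_algebra.
From mathcomp Require Import complex mxtens.
From mathcomp Require Import reals.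
Set Implicit Arguments. Unset Strict Implicit. Unset Printing Implicit Defensive.
Import Order.TTheory GRing.Theory Num.Theory.
Local Open Scope ring_scope.
Local Open Scope complex_scope.

Section QDefs.
Variable R : realType.
Local Notation C := R[i].

Definition adjmx {m n} (A : 'M[C]_(m, n)) : 'M[C]_(n, m) :=
  (map_mx (@conjc R) A)^T.

Definition hermitian {n} (A : 'M[C]_n) : Prop := adjmx A = A.

Definition psd {n} (A : 'M[C]_n) : Prop :=
  forall v : 'cV[C]_n, 0 <= (adjmx v *m A *m v) 0 0.

Definition density {n} (A : 'M[C]_n) : Prop :=
  hermitian A /\ psd A /\ \tr A = 1.

Definition unitary {n} (U : 'M[C]_n) : Prop := U *m adjmx U = 1%:M.

(* partial trace over the second tensor factor of C^m (x) C^n,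
   with the index convention of tensmx (mxtens_index (i, k)). *)
Definition ptrace2 {m n} (M : 'M[C]_(m * n)) : 'M[C]_m :=
  \matrix_(i, j) \sum_(k < n) M (mxtens_index (i, k)) (mxtens_index (j, k)).

End QDefs.

(* Diagonalize rhoT = V^* diag(a, 1 - a) V and rhoA = W^* diag(b, 1 - b) W by
   unitaries; then rhoT (x) rhoA = G^* D G with G = V (x) W and
   D = diag(ab, a(1 - b), (1 - a)b, (1 - a)(1 - b)), and replacing U by U G^*
   makes the input state diagonal.  If v is an eigenrow of rho_out for the
   eigenvalue l, then l |v|^2 = sum_x D_x p_x with p_x = sum_k |((v (x) e_k) U)_x|^2.
   Unitarity of U gives sum_x p_x = 2 |v|^2, and Cauchy-Schwarz against the unit
   columns of U gives 0 <= p_x <= |v|^2.  Under these constraints sum_x D_x p_x is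
   at most |v|^2 times the sum of the two largest entries of D, which is
   max(a, b). *)
From HB Require Import structures.
From mathcomp Require Import all_boot all_order all_algebra.
From mathcomp Require Import complex mxtens.
From mathcomp Require Import reals.
From mathcomp Require Import ring lra.
Set Implicit Arguments. Unset Strict Implicit. Unset Printing Implicit Defensive.
Import Order.TTheory GRing.Theory Num.Theory.
Local Open Scope complex_scope.
Local Open Scope ring_scope.

Lemma ord2_cases (i : 'I_2) : i = 0 \/ i = 1.
Proof. by case: i => [[|[|k]]] // ?; [left | right]; apply: val_inj. Qed.

Lemma sum_ord2 (V : nmodType) (F : 'I_2 -> V) : \sum_i F i = F 0 + F 1.
Proof. by rewrite big_ord_recl big_ord1; congr (_ + F _); apply: val_inj. Qed.

Lemma sum_mxtens (V : nmodType) m n (F : 'I_(m * n) -> V) :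
  \sum_x F x = \sum_i \sum_k F (mxtens_index (i, k)).
Proof.
rewrite pair_big /= (reindex (@mxtens_index m n)) /=; last first.
  by exists (@mxtens_unindex m n) => x _; rewrite (mxtens_indexK, mxtens_unindexK).
by apply: eq_bigr => -[i k].
Qed.

Lemma tensrowE (T : pzRingType) m n (u : 'rV[T]_m) (w : 'rV[T]_n) i j :
  (u *t w) 0 (mxtens_index (i, j)) = u 0 i * w 0 j.
Proof.
have -> : 0 = mxtens_index (0 : 'I_1, 0 : 'I_1) :> 'I_(1 * 1) by apply: val_inj.
by rewrite tensmxE; congr (u _ _ * w _ _); apply: val_inj.
Qed.

Lemma diag_mx_tens (T : comPzRingType) m n (d : 'rV[T]_m) (e : 'rV[T]_n) :
  diag_mx d *t diag_mx e = diag_mx (d *t e).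
Proof.
apply/matrixP => x y; case: (mxtens_indexP x) => i k; case: (mxtens_indexP y) => j l.
rewrite tensmxE [in RHS]mxE tensrowE !mxE (inj_eq (can_inj (@mxtens_indexK m n))).
by rewrite xpair_eqE; case: (i == j); case: (k == l); rewrite ?mulr1n ?mulr0n ?mulr0 ?mul0r.
Qed.

Lemma tensmx11 (T : pzRingType) m n : (1%:M : 'M[T]_m) *t (1%:M : 'M[T]_n) = 1%:M.
Proof.
apply/matrixP => x y; case: (mxtens_indexP x) => i k; case: (mxtens_indexP y) => j l.
rewrite tensmxE !mxE (inj_eq (can_inj (@mxtens_indexK m n))) xpair_eqE.
by case: (i == j); case: (k == l); rewrite ?mulr1 ?mulr0.
Qed.

Lemma sum_weighted_le (F : numDomainType) (I : finType) (S : {set I}) (f p : I -> F)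
    (t c : F) :
  {in S, forall a, t <= f a} -> {in ~: S, forall a, f a <= t} ->
  (forall a, 0 <= p a <= c) -> \sum_a p a = #|S|%:R * c ->
  \sum_a f a * p a <= c * \sum_(a in S) f a.
Proof.
move=> fS fSC p_bnd p_sum.
have -> : \sum_a f a * p a = \sum_a (f a - t) * p a + t * (#|S|%:R * c).
  by rewrite -p_sum mulr_sumr -big_split /=; apply: eq_bigr => a _; rewrite mulrBl subrK.
have -> : c * \sum_(a in S) f a = \sum_(a in S) (f a - t) * c + t * (#|S|%:R * c).
  by rewrite -mulr_suml sumrB sumr_const -mulr_natl; ring.
rewrite lerD2r (bigID (mem S)) /= -[X in _ <= X]addr0 lerD //.
  apply: ler_sum => a aS; have /andP[_ pc] := p_bnd a.
  by rewrite ler_wpM2l ?subr_ge0 ?fS.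
apply: sumr_le0 => a aS; have /andP[p0 _] := p_bnd a.
by rewrite mulr_le0_ge0 ?subr_le0 ?fSC ?inE.
Qed.

Section QubitMatrices.
Variable R : realType.
Local Notation C := R[i].
Local Notation diagC d := (diag_mx (map_mx (real_complex R) d)).

Definition sqnormc (z : C) : R := complex.Re z ^+ 2 + complex.Im z ^+ 2.

Lemma mulcJE (z : C) : z * z^* = (sqnormc z)%:C.
Proof.
case: z => a b; rewrite /sqnormc /=; simpc.
by apply/eqP; rewrite eq_complex /=; apply/andP; split; apply/eqP; ring.
Qed.

Lemma sqnormc_ge0 (z : C) : 0 <= sqnormc z.
Proof. by rewrite addr_ge0 ?sqr_ge0. Qed.

Lemma sqnormc_gt0 (z : C) : z != 0 -> 0 < sqnormc z.
Proof.
case: z => a b nz; rewrite lt_def sqnormc_ge0 andbT /sqnormc /= paddr_eq0 ?sqr_ge0 //.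
by rewrite !sqrf_eq0; apply: contra nz => /andP[/eqP -> /eqP ->].
Qed.

Lemma sqnormcZ (r : R) (z : C) : sqnormc (r%:C * z) = r ^+ 2 * sqnormc z.
Proof. by case: z => a b; rewrite /sqnormc /=; ring. Qed.

Lemma sum_sqnormcE (I : Type) (r : seq I) (F : I -> C) :
  (\sum_(i <- r) sqnormc (F i))%:C = \sum_(i <- r) F i * (F i)^*.
Proof. by rewrite rmorph_sum /=; apply: eq_bigr => i _; rewrite mulcJE. Qed.

Lemma lagrange_identity (I : finType) (x y : I -> C) :
  \sum_i \sum_j (x i * (y j)^* - x j * (y i)^*) * (x i * (y j)^* - x j * (y i)^*)^*
  = 2 * ((\sum_i x i * (x i)^*) * (\sum_j y j * (y j)^*)
         - (\sum_i x i * y i) * (\sum_j x j * y j)^*).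
Proof.
pose g i j := x i * (x i)^* * (y j * (y j)^*) - x i * y i * (x j * y j)^*.
transitivity (\sum_i \sum_j (g i j + g j i)).
  by apply: eq_bigr => i _; apply: eq_bigr => j _; rewrite /g !rmorphB !rmorphM /= !conjCK; ring.
under eq_bigr do rewrite big_split.
rewrite big_split /= [X in _ + X]exchange_big /=.
suff -> : \sum_i \sum_j g i j = (\sum_i x i * (x i)^*) * (\sum_j y j * (y j)^*)
                               - (\sum_i x i * y i) * (\sum_j x j * y j)^* by ring.
rewrite rmorph_sum !big_distrlr -sumrB; apply: eq_bigr => i _.
by rewrite -sumrB.
Qed.

Lemma sqnormc_sum_le (I : finType) (x y : I -> C) :
  sqnormc (\sum_i x i * y i) <= (\sum_i sqnormc (x i)) * (\sum_i sqnormc (y i)).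
Proof.
rewrite -subr_ge0 -(pmulr_rge0 _ (ltr0n R 2)).
have -> : 2%:R * ((\sum_i sqnormc (x i)) * (\sum_i sqnormc (y i))
                  - sqnormc (\sum_i x i * y i))
    = \sum_i \sum_j sqnormc (x i * (y j)^* - x j * (y i)^*).
  apply: complexI; rewrite rmorph_sum /=; under [RHS]eq_bigr do rewrite sum_sqnormcE.
  by rewrite lagrange_identity !(rmorphM, rmorphB, rmorph_nat) /= -!sum_sqnormcE -mulcJE.
by apply: sumr_ge0 => i _; apply: sumr_ge0 => j _; apply: sqnormc_ge0.
Qed.

Lemma adjmxE m n (A : 'M[C]_(m, n)) i j : adjmx A i j = (A j i)^*.
Proof. by rewrite !mxE. Qed.

Lemma adjmxK m n (A : 'M[C]_(m, n)) : adjmx (adjmx A) = A.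
Proof. by apply/matrixP => i j; rewrite !adjmxE conjCK. Qed.

Lemma adjmx_mul m n p (A : 'M[C]_(m, n)) (B : 'M[C]_(n, p)) :
  adjmx (A *m B) = adjmx B *m adjmx A.
Proof. by rewrite /adjmx map_mxM trmx_mul. Qed.

Lemma adjmx_tens m n p q (A : 'M[C]_(m, n)) (B : 'M[C]_(p, q)) :
  adjmx (A *t B) = adjmx A *t adjmx B.
Proof. by rewrite /adjmx map_mxT trmx_tens. Qed.

Lemma mul_adjmx_unitary n (U : 'M[C]_n) : unitary U -> adjmx U *m U = 1%:M.
Proof. exact: mulmx1C. Qed.

Lemma unitary_adjmx n (U : 'M[C]_n) : unitary U -> unitary (adjmx U).
Proof. by move=> hU; rewrite /unitary adjmxK mul_adjmx_unitary. Qed.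

Lemma unitary_mul n (U V : 'M[C]_n) : unitary U -> unitary V -> unitary (U *m V).
Proof. by move=> hU hV; rewrite /unitary adjmx_mul mulmxA -(mulmxA U) hV mulmx1. Qed.

Lemma unitary_tens m n (U : 'M[C]_m) (V : 'M[C]_n) :
  unitary U -> unitary V -> unitary (U *t V).
Proof. by move=> hU hV; rewrite /unitary adjmx_tens tensmx_mul hU hV tensmx11. Qed.

Definition sqnormv n (v : 'rV[C]_n) : R := \sum_j sqnormc (v 0 j).

Lemma mulmx_adjE n (v : 'rV[C]_n) : (v *m adjmx v) 0 0 = (sqnormv v)%:C.
Proof. by rewrite mxE rmorph_sum; apply: eq_bigr => j _; rewrite adjmxE mulcJE. Qed.

Lemma sqnormv_gt0 n (v : 'rV[C]_n) : v != 0 -> 0 < sqnormv v.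
Proof.
move=> /eqP nz; have [j vj] : exists j, v 0 j != 0.
  apply/existsP; apply: contra_notT nz; rewrite negb_exists => /forallP v0.
  by apply/matrixP => i j; rewrite ord1 mxE; apply/eqP/negPn/v0.
rewrite /sqnormv (bigD1 j) //= ltr_wpDr ?sqnormc_gt0 //.
by apply: sumr_ge0 => k _; apply: sqnormc_ge0.
Qed.

Lemma sqnormvZ n (r : R) (v : 'rV[C]_n) : sqnormv (r%:C *: v) = r ^+ 2 * sqnormv v.
Proof. by rewrite /sqnormv mulr_sumr; apply: eq_bigr => j _; rewrite mxE sqnormcZ. Qed.

Lemma sqnormv_unitary n (v : 'rV[C]_n) U : unitary U -> sqnormv (v *m U) = sqnormv v.
Proof.
move=> hU; apply: complexI; rewrite -!mulmx_adjE adjmx_mul mulmxA -(mulmxA v).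
by rewrite hU mulmx1.
Qed.

Lemma unitary_col_sqnorm n (U : 'M[C]_n) a : unitary U -> \sum_x sqnormc (U x a) = 1.
Proof.
move/mul_adjmx_unitary/matrixP/(_ a a); rewrite mxE [RHS]mxE eqxx mulr1n => hU.
apply: complexI; rewrite sum_sqnormcE rmorph1 -hU.
by apply: eq_bigr => x _; rewrite adjmxE mulrC.
Qed.

Lemma eigenvalue_psd_ge0 n (A : 'M[C]_n) (x : R) :
  psd A -> eigenvalue A x%:C -> 0 <= x.
Proof.
move=> hA /eigenvalueP [u hu nz].
have := hA (adjmx u); rewrite adjmxK hu -scalemxAl mxE mulmx_adjE -rmorphM ler0c.
by rewrite pmulr_lge0 // sqnormv_gt0.
Qed.

Lemma eigenvalue_unit_eigenrow n (A : 'M[C]_n) (c : C) :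
  eigenvalue A c -> exists2 w : 'rV_n, w *m A = c *: w & sqnormv w = 1.
Proof.
case/eigenvalueP => u hu nz; have u_gt0 := sqnormv_gt0 nz.
exists ((Num.sqrt (sqnormv u))^-1%:C *: u); first by rewrite -scalemxAl hu !scalerA mulrC.
by rewrite sqnormvZ exprVn sqr_sqrtr ?mulVf ?gt_eqF // ltW.
Qed.

Definition orth_completion (w : 'rV[C]_2) : 'M[C]_2 :=
  \matrix_(i, j) if i == 0 then w 0 j else if j == 0 then - (w 0 1)^* else (w 0 0)^*.

Lemma row0_orth_completion w : row 0 (orth_completion w) = w.
Proof. by apply/rowP => j; rewrite !mxE. Qed.

Lemma unitary_orth_completion w : sqnormv w = 1 -> unitary (orth_completion w).
Proof.
move=> hw; have {hw} : (sqnormv w)%:C = 1 by rewrite hw.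
rewrite /sqnormv sum_sqnormcE sum_ord2 => hw.
apply/matrixP => i j; rewrite mxE sum_ord2 !adjmxE !mxE.
case: (ord2_cases i) => ->; case: (ord2_cases j) => -> /=; rewrite ?rmorphN /= ?conjCK.
- exact: hw.
- by ring.
- by ring.
- by rewrite -hw; ring.
Qed.

Definition qubit_spectrum (x : R) : 'rV[R]_2 := \row_i (if i == 0 then x else 1 - x).

Lemma density2_unitary_diag (rho V : 'M[C]_2) (x : R) :
  density rho -> unitary V -> row 0 V *m rho = x%:C *: row 0 V ->
  V *m rho *m adjmx V = diagC (qubit_spectrum x).
Proof.
case=> herm [_ tr1] hV hrow; set M := V *m rho *m adjmx V.
have M0 j : M 0 j = x%:C * (0 == j)%:R.
  have : row 0 M = x%:C *: row 0 1%:M by rewrite !row_mul hrow -scalemxAl -row_mul hV.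
  by move/rowP/(_ j); rewrite !mxE.
have M10 : M 1 0 = 0.
  have hermM : adjmx M = M by rewrite /M !adjmx_mul adjmxK herm mulmxA.
  by rewrite -hermM adjmxE M0 mulr0 rmorph0.
have M11 : M 1 1 = (1 - x)%:C.
  have : \tr M = 1 by rewrite /M mxtrace_mulC mulmxA mul_adjmx_unitary // mul1mx.
  by rewrite /mxtrace sum_ord2 M0 mulr1 rmorphB rmorph1 => <-; ring.
apply/matrixP => i j.
by case: (ord2_cases i) => ->; case: (ord2_cases j) => ->;
  rewrite ?M0 ?M10 ?M11 !mxE ?mulr1 ?mulr0.
Qed.

Lemma density2_decomp (rho : 'M[C]_2) (x : R) :
  density rho -> eigenvalue rho x%:C ->
  exists2 V, unitary V & rho = adjmx V *m diagC (qubit_spectrum x) *m V.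
Proof.
move=> drho /eigenvalue_unit_eigenrow [w hw w1]; have hV := unitary_orth_completion w1.
exists (orth_completion w) => //.
rewrite -(density2_unitary_diag drho hV) ?row0_orth_completion //.
by rewrite !mulmxA mul_adjmx_unitary // mul1mx -mulmxA mul_adjmx_unitary // mulmx1.
Qed.

Lemma tens_unitary_decomp m n (V : 'M[C]_m) (W : 'M[C]_n) (d : 'rV[R]_m) (e : 'rV[R]_n) :
  (adjmx V *m diagC d *m V) *t (adjmx W *m diagC e *m W)
  = adjmx (V *t W) *m diagC (d *t e) *m (V *t W).
Proof. by rewrite -!tensmx_mul adjmx_tens diag_mx_tens map_mxT. Qed.

Lemma diag_quadE p (w : 'rV[C]_p) (d : 'rV[R]_p) :
  (w *m diagC d *m adjmx w) 0 0 = (\sum_a d 0 a * sqnormc (w 0 a))%:C.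
Proof.
rewrite mul_mx_diag mxE rmorph_sum /=; apply: eq_bigr => a _.
by rewrite adjmxE !mxE rmorphM /= -mulcJE; ring.
Qed.

Section PartialTraceWeights.
Variables (m n : nat) (U : 'M[C]_(m * n)) (v : 'rV[C]_m).
Local Notation v_ k := (v *t (delta_mx 0 k : 'rV[C]_n)).

Lemma tensmx_deltaE (k : 'I_n) i l : (v_ k) 0 (mxtens_index (i, l)) = v 0 i *+ (l == k).
Proof. by rewrite tensrowE mxE eqxx /= mulr_natr. Qed.

Lemma tensmx_delta_mulmxE p (A : 'M[C]_(m * n, p)) (k : 'I_n) a :
  ((v_ k) *m A) 0 a = \sum_i v 0 i * A (mxtens_index (i, k)) a.
Proof.
rewrite mxE sum_mxtens; apply: eq_bigr => i _.
under eq_bigr do rewrite tensmx_deltaE mulrnAl mulrb.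
by rewrite -big_mkcond big_pred1_eq.
Qed.

Lemma sqnormv_tensmx_delta (k : 'I_n) : sqnormv (v_ k) = sqnormv v.
Proof.
have sq0 : sqnormc 0 = 0 by apply: complexI; rewrite -mulcJE mul0r.
rewrite /sqnormv sum_mxtens; apply: eq_bigr => i _.
under eq_bigr do rewrite tensmx_deltaE mulrb (fun_if sqnormc) sq0.
by rewrite -big_mkcond big_pred1_eq.
Qed.

Lemma ptrace2_quadE (M : 'M[C]_(m * n)) :
  (v *m ptrace2 M *m adjmx v) 0 0 = \sum_k ((v_ k) *m M *m adjmx (v_ k)) 0 0.
Proof.
transitivity (\sum_j \sum_k
    (\sum_i v 0 i * M (mxtens_index (i, k)) (mxtens_index (j, k))) * (v 0 j)^*).
  rewrite mxE; apply: eq_bigr => j _; rewrite adjmxE -mulr_suml mxE; congr (_ * _).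
  under eq_bigr do rewrite mxE mulr_sumr.
  exact: exchange_big.
rewrite exchange_big; apply: eq_bigr => k _; rewrite mxE sum_mxtens; apply: eq_bigr => j _.
under [RHS]eq_bigr do rewrite adjmxE tensmx_deltaE rmorphMn /= tensmx_delta_mulmxE mulrnAr mulrb.
by rewrite -big_mkcond big_pred1_eq.
Qed.

Definition ptrace_weight a := \sum_k sqnormc (((v_ k) *m U) 0 a).

Lemma ptrace_weight_ge0 a : 0 <= ptrace_weight a.
Proof. by apply: sumr_ge0 => k _; apply: sqnormc_ge0. Qed.

Lemma ptrace_weight_quadE (d : 'rV[R]_(m * n)) :
  (v *m ptrace2 (U *m diagC d *m adjmx U) *m adjmx v) 0 0
  = (\sum_a d 0 a * ptrace_weight a)%:C.
Proof.
rewrite ptrace2_quadE.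
under eq_bigr do rewrite !mulmxA -(mulmxA _ (adjmx U)) -adjmx_mul diag_quadE.
rewrite -rmorph_sum exchange_big /=; apply: congr1.
by apply: eq_bigr => a _; rewrite mulr_sumr.
Qed.

Lemma ptrace_eigen_weights (d : 'rV[R]_(m * n)) (l : R) :
  v *m ptrace2 (U *m diagC d *m adjmx U) = l%:C *: v ->
  l * sqnormv v = \sum_a d 0 a * ptrace_weight a.
Proof.
move=> hv; apply: complexI.
by rewrite -ptrace_weight_quadE hv -scalemxAl mxE mulmx_adjE rmorphM.
Qed.

Hypothesis hU : unitary U.

Lemma ptrace_weight_le a : ptrace_weight a <= sqnormv v.
Proof.
rewrite /ptrace_weight; under eq_bigr do rewrite tensmx_delta_mulmxE.
apply: le_trans (ler_sum _ (fun k _ => sqnormc_sum_le _ _)) _.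
rewrite -mulr_sumr exchange_big /= -(sum_mxtens (fun x => sqnormc (U x a))).
by rewrite unitary_col_sqnorm // mulr1.
Qed.

Lemma ptrace_weight_sum : \sum_a ptrace_weight a = n%:R * sqnormv v.
Proof.
rewrite exchange_big /=.
under eq_bigr => k _ do rewrite -[\sum_a _]/(sqnormv ((v_ k) *m U))
  sqnormv_unitary // sqnormv_tensmx_delta.
by rewrite sumr_const card_ord mulr_natl.
Qed.

End PartialTraceWeights.

Lemma qubit_product_weights_le (a b l c : R) (p : 'I_(2 * 2) -> R) :
  1 / 2 <= a -> 0 <= 1 - a -> 1 / 2 <= b -> 0 <= 1 - b -> 0 < c ->
  (forall x, 0 <= p x <= c) -> \sum_x p x = 2 * c ->
  l * c = \sum_x (qubit_spectrum a *t qubit_spectrum b) 0 x * p x ->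
  l <= Num.max a b.
Proof.
move=> ha ha' hb hb' c_gt0 p_bnd p_sum hl.
have dE i j : (qubit_spectrum a *t qubit_spectrum b) 0 (mxtens_index (i, j))
    = (if i == 0 then a else 1 - a) * (if j == 0 then b else 1 - b).
  by rewrite tensrowE !mxE.
have slice (S : {set 'I_(2 * 2)}) (P : 'I_2 -> 'I_2 -> bool) (F : 'I_(2 * 2) -> R) :
    (forall i j, (mxtens_index (i, j) \in S) = P i j) ->
    \sum_(x in S) F x = \sum_i \sum_j (if P i j then F (mxtens_index (i, j)) else 0).
  move=> memS; rewrite big_mkcond sum_mxtens.
  by apply: eq_bigr => i _; apply: eq_bigr => j _; rewrite memS.
have card_slice (S : {set 'I_(2 * 2)}) (P : 'I_2 -> 'I_2 -> bool) :
    (forall i j, (mxtens_index (i, j) \in S) = P i j) ->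
    #|S|%:R = \sum_i \sum_j (if P i j then 1 else 0) :> R.
  by move=> memS; rewrite -sumr_const (slice _ P).
rewrite -(ler_pM2l c_gt0) [c * l]mulrC hl.
(* The two largest entries of a (x) b are a b and a (1 - b) when b <= a, and
   a b and (1 - a) b otherwise: the first row, resp. the first column. *)
case: (lerP b a) => hab.
- pose S := [set x : 'I_(2 * 2) | (mxtens_unindex x).1 == 0].
  have memS i j : (mxtens_index (i, j) \in S) = (i == 0) by rewrite inE mxtens_indexK.
  apply: le_trans (sum_weighted_le (S := S) (t := (1 - a) * b) _ _ p_bnd _) _.
  + move=> x; case: (mxtens_indexP x) => i j; rewrite memS => /eqP ->.
    by rewrite dE; case: (ord2_cases j) => -> /=; nra.
  + move=> x; case: (mxtens_indexP x) => i j; rewrite in_setC memS.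
    by case: (ord2_cases i) => -> //= _; rewrite dE; case: (ord2_cases j) => -> /=; nra.
  + by rewrite p_sum (card_slice _ _ memS) !sum_ord2 /=; lra.
  + by rewrite (slice _ _ _ memS) !sum_ord2 !dE /= ler_pM2l //; nra.
- pose S := [set x : 'I_(2 * 2) | (mxtens_unindex x).2 == 0].
  have memS i j : (mxtens_index (i, j) \in S) = (j == 0) by rewrite inE mxtens_indexK.
  apply: le_trans (sum_weighted_le (S := S) (t := a * (1 - b)) _ _ p_bnd _) _.
  + move=> x; case: (mxtens_indexP x) => i j; rewrite memS => /eqP ->.
    by rewrite dE; case: (ord2_cases i) => -> /=; nra.
  + move=> x; case: (mxtens_indexP x) => i j; rewrite in_setC memS.
    by case: (ord2_cases j) => -> //= _; rewrite dE; case: (ord2_cases i) => -> /=; nra.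
  + by rewrite p_sum (card_slice _ _ memS) !sum_ord2 /=; lra.
  + by rewrite (slice _ _ _ memS) !sum_ord2 !dE /= ler_pM2l //; nra.
Qed.

End QubitMatrices.

Theorem theorem1 (R : realType) (rhoT rhoA : 'M[R[i]]_2)
  (U : 'M[R[i]]_(2 * 2)) (alpha beta alpha_out : R) :
  density rhoT -> density rhoA -> unitary U ->
  eigenvalue rhoT alpha%:C -> eigenvalue rhoT (1 - alpha)%:C -> 1 / 2 <= alpha ->
  eigenvalue rhoA beta%:C -> eigenvalue rhoA (1 - beta)%:C -> 1 / 2 <= beta ->
  let rho_out := ptrace2 (U *m (rhoT *t rhoA) *m adjmx U) in
  eigenvalue rho_out alpha_out%:C -> eigenvalue rho_out (1 - alpha_out)%:C ->
  1 / 2 <= alpha_out ->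
  alpha_out <= Num.max alpha beta.
Proof.
move=> dT dA hU eT eT' ha eA eA' hb rho_out /eigenvalueP[v hv v_neq0] _ _.
have [V hV rhoTE] := density2_decomp dT eT.
have [W hW rhoAE] := density2_decomp dA eA.
have hUG := unitary_mul hU (unitary_adjmx (unitary_tens hV hW)).
move: hv; rewrite /rho_out rhoTE rhoAE tens_unitary_decomp; set D := diag_mx _.
have -> : U *m (adjmx (V *t W) *m D *m (V *t W)) *m adjmx U
    = U *m adjmx (V *t W) *m D *m adjmx (U *m adjmx (V *t W)).
  by rewrite adjmx_mul adjmxK !mulmxA.
move/ptrace_eigen_weights => hl.
apply: (qubit_product_weights_le ha _ hb _ (sqnormv_gt0 v_neq0) _ _ hl).
- exact: eigenvalue_psd_ge0 dT.2.1 eT'.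
- exact: eigenvalue_psd_ge0 dA.2.1 eA'.
- by move=> x; rewrite ptrace_weight_ge0 ptrace_weight_le.
- by rewrite ptrace_weight_sum.
Qed.
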